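(* Let $G$ be a second countable locally compact Hausdorff groupoid with a fixed left Haar system $\lambda=\{\lambda^u\}_{u\in G^0}$, and let $(\Phi,\Psi)$ be a complementary pair of $N$-functions with $\Phi\in\Delta_2$. If $\sup_{u\in G^0}\lambda^u(G)<\infty$, then $I_0^\Phi(G,\lambda)\subseteq I(G,\lambda)$ and $E_0^\Phi\subseteq E^1$. In particular, this holds if $G$ is compact.
   Context: $G^0$ is the unit space, $r(x)=xx^{-1}$, $d(x)=x^{-1}x$, $G^u=r^{-1}(u)$; the left Haar system consists of positive Radon measures $\lambda^u$ with support $G^u$, $u\mapsto\int f d\lambda^u$ continuous for $f\in C_c(G)$, and $\int f(xy)d\lambda^{d(x)}(y)=\int f(y)d\lambda^{r(x)}(y)$. An $N$-function is a continuous even convex $\Phi:\mathbb R\to[0,\infty)$ with $\Phi(x)=0$ iff $x=0$, $\Phi(x)/x\to0$ as $x\to0$, $\to\infty$ as $x\to\infty$; complementary function $\Psi(y)=\sup_{x\ge0}(x|y|-\Phi(x))$. $\Phi\in\Delta_2$: there is $k>0$ with $\Phi(2x)\le k\Phi(x)$ for all $x\ge0$ ($G$ non-compact), resp. for $x\ge x_0$, some $x_0>0$ ($G$ compact). $L^\Phi(G^u)$: measurable $f$ on $G^u$ with $\int\Phi(\alpha|f|)d\lambda^u<\infty$ for some $\alpha>0$, gauge norm $\|f\|^0_\Phi=\inf\{k>0:\int\Phi(|f|/k)d\lambda^u\le1\}$. For $f\in C_c(G)$, $f^u=f|_{G^u}$. $I_0^\Phi(G,\lambda)$ is the space of bounded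 sections $\xi=(\xi^u)_{u\in G^0}$, $\xi^u\in L^\Phi(G^u)$, $\sup_u\|\xi^u\|^0_\Phi<\infty$ (not necessarily continuous); $I(G,\lambda)$ is the space of sections with $\xi^u\in L^1(G^u,\lambda^u)$ and $\sup_u\|\xi^u\|_1<\infty$. $E_0^\Phi$ is the space of $\xi\in I_0^\Phi(G,\lambda)$ which are locally close to $C_c(G)$ (for each $u_0$, $\varepsilon>0$ there are $f\in C_c(G)$ and a neighbourhood $V$ of $u_0$ with $\|\xi^v-f^v\|^0_\Phi<\varepsilon$ on $V$) and with $u\mapsto\|\xi^u\|^0_\Phi$ vanishing at infinity; $E^1$ is defined analogously with the $L^1(\lambda^u)$-norms in place of $\|\cdot\|^0_\Phi$. *)

From HB Require Import structures.
From mathcomp Require Import all_boot all_order all_algebra.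
From mathcomp Require Import all_classical all_reals all_analysis.
Set Implicit Arguments. Unset Strict Implicit. Unset Printing Implicit Defensive.
Import Order.TTheory GRing.Theory Num.Theory.
Import numFieldNormedType.Exports.
Local Open Scope classical_set_scope.
Local Open Scope ring_scope.

Record groupoid (T : Type) := Groupoid {
  comp : T -> T -> Prop;
  gmul : T -> T -> T;               (* product, meaningful on G^(2) *)
  ginv : T -> T;
  ginvK : forall x, ginv (ginv x) = x;
  comp_inv : forall x, comp (ginv x) x;
  gmulA : forall x y z, comp x y -> comp y z ->
     [/\ comp (gmul x y) z, comp x (gmul y z) &
         gmul (gmul x y) z = gmul x (gmul y z)];
  gmul_cancel : forall x y, comp x y ->
     gmul (ginv x) (gmul x y) = y /\ gmul (gmul x y) (ginv y) = x }.

Section GroupoidDefs.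
Context {T : Type} (G : groupoid T).
Definition rg (x : T) := gmul G x (ginv G x).
Definition dg (x : T) := gmul G (ginv G x) x.
Definition G0 : set T := [set u | exists x, u = rg x].
Definition Gu (u : T) : set T := [set x | rg x = u].
End GroupoidDefs.

Definition lch_groupoid (T : topologicalType) (G : groupoid T) : Prop :=
  [/\ @second_countable T, hausdorff_space T, locally_compact [set: T],
      {within [set p : T * T | comp G p.1 p.2],
         continuous (fun p : T * T => gmul G p.1 p.2)}
    & continuous (ginv G)].

Notation borelT T := (g_sigma_algebraType (@open T)).

Section Measures.
Context {R : realType} {T : ptopologicalType}.
Local Open Scope ereal_scope.

Definition radon (mu : {measure set (borelT T) -> \bar R}) : Prop :=
  [/\ (forall K : set T, compact K -> mu K < +oo),
      (forall A : set T, measurable (A : set (borelT T)) ->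
          mu A = ereal_inf [set mu U | U in [set U : set T | open U /\ A `<=` U]])
    & (forall U : set T, open U ->
          mu U = ereal_sup [set mu K | K in [set K : set T | compact K /\ K `<=` U]])].

Definition msupport (mu : {measure set (borelT T) -> \bar R}) : set T :=
  [set x | forall U : set T, open U -> U x -> 0 < mu U].

Definition Cc (f : T -> R) : Prop :=
  continuous f /\ compact (closure [set x | f x != 0%R]).
End Measures.

Section Haar.
Local Open Scope ereal_scope.
Definition haar_system {R : realType} {T : ptopologicalType} (G : groupoid T)
  (lam : T -> {measure set (borelT T) -> \bar R}) : Prop :=
  [/\ (forall u, G0 G u -> radon (lam u) /\ msupport (lam u) = Gu G u),
      (forall f : T -> R, Cc f ->
         {within G0 G, continuous (fun u => fine (\int[lam u]_x (f x)%:E))})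
    & (forall (f : T -> R) (x : T), Cc f ->
         \int[lam (dg G x)]_(y in Gu G (dg G x)) (f (gmul G x y))%:E
         = \int[lam (rg G x)]_y (f y)%:E)].
End Haar.

Section Nfun.
Context {R : realType}.
Definition N_function (Phi : R -> R) : Prop :=
  [/\ continuous Phi,
      (forall x, Phi (- x) = Phi x),
      (forall x, 0 <= Phi x),
      (forall x, Phi x = 0 <-> x = 0) &
   [/\
      (forall x y t, 0 <= t <= 1 ->
          Phi (t * x + (1 - t) * y) <= t * Phi x + (1 - t) * Phi y),
      (fun x => Phi x / x) x @[x --> 0^'] --> 0
    & (fun x => Phi x / x) x @[x --> +oo] --> +oo]].

Definition compl_fun (Phi : R -> R) : R -> R :=
  fun y => sup [set x * `|y| - Phi x | x in [set x : R | 0 <= x]].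

(* Delta_2 condition; [cpt] says whether G is compact *)
Definition Delta2 (cpt : Prop) (Phi : R -> R) : Prop :=
  (~ cpt -> exists k, 0 < k /\ forall x, 0 <= x -> Phi (2 * x) <= k * Phi x) /\
  (cpt -> exists k x0, [/\ 0 < k, 0 < x0 &
            forall x, x0 <= x -> Phi (2 * x) <= k * Phi x]).
End Nfun.

Section Sections.
Context {R : realType} {T : ptopologicalType} (G : groupoid T)
  (lam : T -> {measure set (borelT T) -> \bar R}).
Local Open Scope ereal_scope.

Definition in_LPhi (Phi : R -> R) (u : T) (f : T -> R) : Prop :=
  measurable_fun (Gu G u : set (borelT T)) f /\
  exists alpha : R, (0 < alpha)%R /\
    \int[lam u]_(x in Gu G u) (Phi (alpha * `|f x|))%:E < +oo.

Definition gauge_norm (Phi : R -> R) (u : T) (f : T -> R) : \bar R :=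
  ereal_inf [set k%:E | k in [set k : R | (0 < k)%R /\
     \int[lam u]_(x in Gu G u) (Phi (`|f x| / k))%:E <= 1]].

Definition L1_norm (u : T) (f : T -> R) : \bar R :=
  \int[lam u]_(x in Gu G u) (`|f x|)%:E.

(* sections are functions on G: xi^u is the restriction of xi to G^u *)
Definition I0Phi (Phi : R -> R) : set (T -> R) :=
  [set xi | (forall u, G0 G u -> in_LPhi Phi u xi) /\
            exists M : R, forall u, G0 G u -> gauge_norm Phi u xi <= M%:E].

Definition I1 : set (T -> R) :=
  [set xi | (forall u, G0 G u ->
               measurable_fun (Gu G u : set (borelT T)) xi /\
               (lam u).-integrable (Gu G u) (EFin \o xi)) /\
            exists M : R, forall u, G0 G u -> L1_norm u xi <= M%:E].

Definition loc_close_Cc (N : T -> (T -> R) -> \bar R) (xi : T -> R) : Prop :=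
  forall u0, G0 G u0 -> forall eps : R, (0 < eps)%R ->
    exists f : T -> R, Cc f /\ exists V : set T, [/\ open V, V u0 &
      forall v, V v -> G0 G v -> N v (xi \- f)%R < eps%:E].

Definition vanish_infty (N : T -> (T -> R) -> \bar R) (xi : T -> R) : Prop :=
  forall eps : R, (0 < eps)%R -> exists K : set T,
    [/\ compact K, K `<=` G0 G &
        forall u, G0 G u -> ~ K u -> N u xi < eps%:E].

Definition E0Phi (Phi : R -> R) : set (T -> R) :=
  [set xi | I0Phi Phi xi /\ loc_close_Cc (gauge_norm Phi) xi /\
            vanish_infty (gauge_norm Phi) xi].

Definition E1 : set (T -> R) :=
  [set xi | I1 xi /\ loc_close_Cc L1_norm xi /\ vanish_infty L1_norm xi].
End Sections.

From Pilot Require Import Defs.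
From HB Require Import structures.
From mathcomp Require Import all_boot all_order all_algebra.
From mathcomp Require Import all_classical all_reals all_analysis.
From mathcomp Require Import measurable_realfun.
Import Order.TTheory GRing.Theory Num.Theory.
Import numFieldNormedType.Exports.
Local Open Scope classical_set_scope.
Local Open Scope ring_scope.

(* Since Phi(x)/x -> +oo, Phi has an affine minorant: x <= Phi(x) + t0 for
   x >= 0.  Integrating it against lam^u shows that int Phi(|f|/k) dlam^u <= 1
   forces int |f| dlam^u <= k (1 + t0 lam^u(G^u)), so a uniform bound
   lam^u(G) <= M gives ||f||_1 <= (1 + t0 M) ||f||_Phi uniformly in u.  This
   comparison of norms carries boundedness, local approximation by C_c(G) and
   vanishing at infinity over from the gauge norms to the L^1 norms.  When G
   is compact, the bound M exists because u |-> lam^u(G) is continuous on the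
   compact unit space r(G). *)

Section BorelMeasurability.
Context {T : ptopologicalType}.

Lemma closed_measurable_borel (A : set T) :
  closed A -> measurable (A : set (borelT T)).
Proof.
move=> cA; rewrite -[A]setCK; apply: measurableC.
by apply: sub_gen_smallest; exact: closed_openC.
Qed.

Lemma continuous_measurable_borel (R : realType) (f : T -> R)
    (D : set (borelT T)) :
  continuous f -> measurable_fun D f.
Proof.
move=> cf mD; apply: (measurability _ (RGenOpens.measurableE R)) => //.
move=> _ [_ [a [b ->]] <-]; apply: measurableI => //.
by apply: sub_gen_smallest; apply: open_comp => // ? _; exact: cf.
Qed.

Lemma msupport_closed (R : realType) (mu : {measure set (borelT T) -> \bar R}) :
  closed (msupport mu).
Proof.
rewrite -[msupport mu]setCK; apply: open_closedC; rewrite openE => x /= nx.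
have [U [oU Ux nU]] : exists U : set T, [/\ open U, U x & ~ (0 < mu U)%E].
  apply: contra_notP nx => H U oU Ux; apply: contra_notP H => H.
  by exists U.
apply: (@filterS _ _ _ U); last exact: open_nbhs_nbhs.
by move=> y Uy /(_ U oU Uy).
Qed.

End BorelMeasurability.

Lemma superlinear_affine_minorant {R : realType} {Phi : R -> R} :
  (fun x => Phi x / x) x @[x --> +oo] --> +oo ->
  (forall x, 0 <= Phi x) ->
  exists t0, 0 <= t0 /\ forall x, 0 <= x -> x <= Phi x + t0.
Proof.
move=> /cvgryPge/(_ 1)[M [_ HM]] Phi0.
exists `|M|; split => // x x0.
have [xM|Mx] := leP x `|M|; first by rewrite -[x]add0r lerD.
have xpos : 0 < x by apply: le_lt_trans Mx.
have := HM x (le_lt_trans (ler_norm M) Mx).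
by rewrite ler_pdivlMr // mul1r => /le_trans; apply; rewrite lerDl.
Qed.

Lemma integral_norm_le_gauge {R : realType} {T : ptopologicalType}
    {mu : {measure set (borelT T) -> \bar R}} {D : set (borelT T)}
    {Phi : R -> R} {t0 m k : R} {f : T -> R} :
  measurable D -> continuous Phi -> (forall x, 0 <= Phi x) ->
  0 <= t0 -> (forall x, 0 <= x -> x <= Phi x + t0) ->
  (mu D <= m%:E)%E -> measurable_fun D f -> 0 < k ->
  (\int[mu]_(x in D) (Phi (`|f x| / k))%:E <= 1)%E ->
  (\int[mu]_(x in D) (`|f x|)%:E <= (k * (1 + t0 * m))%:E)%E.
Proof.
move=> mD cPhi Phi0 t00 Phit0 muD mf k0 intPhi.
have mfabs : measurable_fun D (fun x => `|f x|).
  by apply: (measurableT_comp (f := @Num.norm R R)) => //; exact: normr_measurable.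
have mPhi : measurable_fun D (fun x => Phi (`|f x| / k)).
  apply: (measurableT_comp (continuous_measurable_fun cPhi)).
  exact: measurable_funM.
have mPhit0 : measurable_fun D (fun x => (Phi (`|f x| / k))%:E + t0%:E)%E.
  by apply: emeasurable_funD => //; exact/measurable_EFinP.
apply: (@le_trans _ _
    (\int[mu]_(x in D) (k%:E * ((Phi (`|f x| / k))%:E + t0%:E)))%E).
  apply: ge0_le_integral => //.
  - exact/measurable_EFinP.
  - exact: emeasurable_funM.
  - move=> x _; rewrite -EFinD -EFinM lee_fin.
    have le_fx := Phit0 _ (divr_ge0 (normr_ge0 (f x)) (ltW k0)).
    by rewrite -(ler_pM2l k0) mulrCA divff ?gt_eqF // mulr1 in le_fx.
rewrite ge0_integralZl_EFin //; last 2 first.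
- by move=> x _; rewrite -EFinD lee_fin addr_ge0.
- exact: ltW.
rewrite ge0_integralD //; last 2 first.
- by move=> x _; rewrite lee_fin.
- exact/measurable_EFinP.
rewrite integral_cst // EFinM; apply: lee_wpmul2l; first by rewrite lee_fin ltW.
by rewrite EFinD; apply: leeD => //; rewrite EFinM; apply: lee_wpmul2l.
Qed.

Lemma rg_continuous (T : topologicalType) (G : groupoid T) :
  lch_groupoid G -> continuous (rg G).
Proof.
case=> _ _ _ cmul cinv x.
pose g y := (y, ginv G y).
have comp_g y : Defs.comp G (g y).1 (g y).2.
  by have := comp_inv G (ginv G y); rewrite ginvK.
have g_cvg : g @ x --> g x by apply: cvg_pair => //; exact: cinv.
have g_within : g @ x --> within [set p | Defs.comp G p.1 p.2] (nbhs (g x)).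
  by move=> P /g_cvg; apply: (@filterS _ (nbhs x)) => y; apply; exact: comp_g.
exact: cvg_comp g_within ((proj1 (subspace_continuousP _ _) cmul) _ (comp_g x)).
Qed.

Section HaarSystem.
Context {R : realType} {T : ptopologicalType} {G : groupoid T}
  {lam : T -> {measure set (borelT T) -> \bar R}}.
Hypothesis haar : haar_system G lam.

Lemma Gu_measurable u : G0 G u -> measurable (Gu G u : set (borelT T)).
Proof.
case: haar => hradon _ _ G0u; apply: closed_measurable_borel.
by case: (hradon u G0u) => _ <-; exact: msupport_closed.
Qed.

(* Apply the continuity axiom of the Haar system to the constant 1. *)
Lemma haar_mass_bounded_compact :
  lch_groupoid G -> compact [set: T] ->
  exists M : R, forall u, G0 G u -> (lam u [set: T] <= M%:E)%E.
Proof.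
move=> lch cT; case: haar => hradon hcont _.
have cG0 : compact (G0 G).
  have -> : G0 G = rg G @` [set: T].
    by apply/seteqP; split=> u /= [x]; [move=> ->|move=> _ <-]; exists x.
  apply: continuous_compact => //.
  by apply: continuous_subspaceT; exact: rg_continuous.
have Cc1 : Cc (fun _ : T => 1 : R).
  split; first by move=> x; exact: cvg_cst.
  have -> : [set x : T | (1 : R) != 0] = setT.
    by apply/seteqP; split => x //= _; exact: oner_neq0.
  by rewrite closureT.
have [B [_ HB]] := compact_bounded (continuous_compact (hcont _ Cc1) cG0).
exists (`|B| + 1) => u G0u.
have finu : lam u [set: T] \is a fin_num.
  by rewrite ge0_fin_numE //; case: (hradon u G0u) => -[+ _ _] _; apply.
have := HB (`|B| + 1) (le_lt_trans (ler_norm B) (ltr_pwDr ltr01 (lexx _))) _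
  (ex_intro2 _ _ u G0u erefl).
rewrite integral_cst // mul1e /= -(fineK finu) lee_fin.
exact: le_trans (ler_norm _).
Qed.

End HaarSystem.

Section DominatedNorms.
Context {R : realType} {T : ptopologicalType} {G : groupoid T}
  {N N' : T -> (T -> R) -> \bar R} {C : R}.
Hypothesis C_gt0 : 0 < C.
Hypothesis N'_lt_N : forall u eta (e : R), G0 G u ->
  measurable_fun (Gu G u : set (borelT T)) eta ->
  (N u eta < e%:E)%E -> (N' u eta < (e * C)%:E)%E.

Lemma loc_close_Cc_dominated xi :
  (forall u, G0 G u -> measurable_fun (Gu G u : set (borelT T)) xi) ->
  loc_close_Cc G N xi -> loc_close_Cc G N' xi.
Proof.
move=> mxi close u0 G0u0 eps eps0.
have [f [Ccf [V [oV Vu0 HV]]]] :=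
  close u0 G0u0 (eps / C) (divr_gt0 eps0 C_gt0).
exists f; split => //; exists V; split => // v Vv G0v.
rewrite -[eps](divfK (lt0r_neq0 C_gt0)); apply: N'_lt_N => //; last exact: HV.
apply: measurable_funB; first exact: mxi.
by apply: continuous_measurable_borel; case: Ccf.
Qed.

Lemma vanish_infty_dominated xi :
  (forall u, G0 G u -> measurable_fun (Gu G u : set (borelT T)) xi) ->
  vanish_infty G N xi -> vanish_infty G N' xi.
Proof.
move=> mxi van eps eps0.
have [K [cK KG0 HK]] := van (eps / C) (divr_gt0 eps0 C_gt0).
exists K; split => // u G0u nKu.
by rewrite -[eps](divfK (lt0r_neq0 C_gt0)); apply: N'_lt_N; [|exact: mxi|exact: HK].
Qed.

End DominatedNorms.

Section OrliczInL1.
Context {R : realType} {T : ptopologicalType} (G : groupoid T)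
  (lam : T -> {measure set (borelT T) -> \bar R}) (Phi : R -> R).
Hypothesis haar : haar_system G lam.
Hypothesis NPhi : N_function Phi.
Hypothesis mass_bounded :
  exists M : R, forall u, G0 G u -> (lam u [set: T] <= M%:E)%E.

Lemma L1_norm_dominated_by_gauge_norm : exists2 C : R, 0 < C &
  forall u eta (e : R), G0 G u ->
    measurable_fun (Gu G u : set (borelT T)) eta ->
    (gauge_norm G lam Phi u eta < e%:E)%E -> (L1_norm G lam u eta < (e * C)%:E)%E.
Proof.
have [M HM] := mass_bounded.
have [cPhi _ Phi0 _ [_ _ Phi_superlinear]] := NPhi.
have [t0 [t0_ge0 Phit0]] := superlinear_affine_minorant Phi_superlinear Phi0.
have HMu u : G0 G u -> (lam u (Gu G u) <= `|M|%:E)%E.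
  move=> G0u; apply: le_trans (le_trans (HM u G0u) _); last first.
    by rewrite lee_fin ler_norm.
  by apply: le_measure; rewrite ?inE //; exact: Gu_measurable haar u G0u.
have C_gt0 : 0 < 1 + t0 * `|M| by rewrite ltr_pwDl // mulr_ge0.
exists (1 + t0 * `|M|) => // u eta e G0u meta /ereal_inf_lt[_ [k [k0 intPhi] <-]] ke.
rewrite /L1_norm; apply: le_lt_trans (integral_norm_le_gauge
  (Gu_measurable haar u G0u) cPhi Phi0 t0_ge0 Phit0 (HMu u G0u) meta k0 intPhi) _.
by rewrite lte_fin ltr_pM2r // -lte_fin.
Qed.

Lemma I0Phi_sub_I1 : I0Phi G lam Phi `<=` I1 G lam.
Proof.
have [C C0 L1_lt] := L1_norm_dominated_by_gauge_norm.
move=> xi [inL [M HM]].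
have L1_bound u : G0 G u -> (L1_norm G lam u xi < ((M + 1) * C)%:E)%E.
  move=> G0u; apply: L1_lt => //; first by case: (inL u G0u).
  by apply: le_lt_trans (HM u G0u) _; rewrite lte_fin ltrDl.
split; last by exists ((M + 1) * C) => u G0u; exact/ltW/L1_bound.
move=> u G0u; have [mxi _] := inL u G0u; split => //.
apply/integrableP; split; first exact/measurable_EFinP.
exact: lt_trans (L1_bound u G0u) (ltry _).
Qed.

Lemma E0Phi_sub_E1 : E0Phi G lam Phi `<=` E1 G lam.
Proof.
have [C C0 L1_lt] := L1_norm_dominated_by_gauge_norm.
move=> xi [I0xi [close van]].
have mxi u : G0 G u -> measurable_fun (Gu G u : set (borelT T)) xi.
  by move=> G0u; case: I0xi => /(_ u G0u)[mxi _] _.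
split; first exact: I0Phi_sub_I1 I0xi.
split; first exact: loc_close_Cc_dominated C0 L1_lt xi mxi close.
exact: vanish_infty_dominated C0 L1_lt xi mxi van.
Qed.

End OrliczInL1.

Theorem lemma3p11 (R : realType) (T : ptopologicalType) (G : groupoid T)
  (lam : T -> {measure set (borelT T) -> \bar R}) (Phi Psi : R -> R) :
  lch_groupoid G -> haar_system G lam ->
  N_function Phi -> Psi = compl_fun Phi ->
  Delta2 (compact [set: T]) Phi ->
  ((exists M : R, forall u, G0 G u -> (lam u [set: T] <= M%:E)%E)
     \/ compact [set: T]) ->
  I0Phi G lam Phi `<=` I1 G lam /\ E0Phi G lam Phi `<=` E1 G lam.
Proof.
move=> lch haar NPhi _ _ bounded_or_compact.
have mass_bounded : exists M : R, forall u, G0 G u -> (lam u [set: T] <= M%:E)%E.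
  by case: bounded_or_compact => // cT; exact: haar_mass_bounded_compact.
by split; [exact: I0Phi_sub_I1 | exact: E0Phi_sub_E1].
Qed.
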